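(* Let $Z$ be a weakly efficient solution of the SDP relaxation described in the context, with first-row data $(z_+,z_-,\rho)$. If $\rho=0$, then $(z_+,z_-,0)$ is feasible and weakly efficient for the QCQP, and its QCQP objective value $F(z_+,z_-,0)=(G(z_+-z_-),0)$ equals the SDP objective value of $Z$.
   Context: Let $k,m,n\in\mathbb{N}$. Let $A_c,A_\delta\in\mathbb{R}^{m\times n}$ with $A_\delta\ge 0$ entrywise, $b_c,b_\delta\in\mathbb{R}^m$ with $b_\delta\ge0$, $G\in\mathbb{R}^{k\times n}$, and $\ell,u\in\mathbb{R}^n$ with $\ell\le u$. All vector inequalities are componentwise. QCQP: variables $x_+,x_-\in\mathbb{R}^n_{\ge0}$, $r\in[0,1]$, subject to $A_cx_+-A_cx_-+rA_\delta x_++rA_\delta x_-+rb_\delta-b_c\le0$ and $\ell\le x_+-x_-\le u$; vector objective $F(x_+,x_-,r)=(G(x_+-x_-),-r)\in\mathbb{R}^{k+1}$, minimized in the Pareto sense. SDP relaxation: variable a symmetric positive semidefinite matrix $Z$ of size $(2n+2)\times(2n+2)$ written in block form with row/column blocks of sizes $1,n,n,1$: $Z=\begin{pmatrix} Z_{00} & z_+^T & z_-^T & \rho\\ z_+ & * & * & w_+\\ z_- & * & * & w_-\\ \rho & w_+^T & w_-^T & \sigma\end{pmatrix}$, with $z_\pm,w_\pm\in\mathbb{R}^n$, $\rho,\sigma\in\mathbb{R}$. Constraints: $Z_{00}=1$; $A_cz_+-A_cz_-+A_\delta(w_++w_-)+\rho\, b_\delta-b_c\le0$; $\ell\le z_+-z_-\le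 u$; $z_+,z_-\ge0$, $\rho\ge0$, $w_+,w_-\ge0$; $\sigma\le1$. Vector objective $(G(z_+-z_-),-\rho)\in\mathbb{R}^{k+1}$, minimized in the Pareto sense. Efficiency (for minimizing a vector function $f$ over a feasible set $\mathcal{X}$): $x^*\in\mathcal{X}$ is efficient if there is no $x\in\mathcal{X}$ with $f(x)\le f(x^* )$ and $f(x)\ne f(x^* )$; weakly efficient if there is no $x\in\mathcal{X}$ with $f(x)<f(x^* )$ (all components strict). *)

From HB Require Import structures.
From mathcomp Require Import all_boot all_order all_algebra.
Set Implicit Arguments. Unset Strict Implicit. Unset Printing Implicit Defensive.
Import Order.TTheory GRing.Theory Num.Theory.
Local Open Scope ring_scope.

Section Defs.
Variable R : realFieldType.

Definition mle (p q : nat) (A B : 'M[R]_(p, q)) : Prop := forall i j, A i j <= B i j.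
Definition mlt (p q : nat) (A B : 'M[R]_(p, q)) : Prop := forall i j, A i j < B i j.

Definition psd (N : nat) (Z : 'M[R]_N) : Prop :=
  Z^T = Z /\ forall x : 'cV[R]_N, 0 <= (x^T *m Z *m x) ord0 ord0.

Definition efficient (T : Type) (p : nat) (X : T -> Prop) (f : T -> 'cV[R]_p) (x : T) : Prop :=
  X x /\ ~ (exists y, X y /\ mle (f y) (f x) /\ f y <> f x).
Definition weakly_efficient (T : Type) (p : nat) (X : T -> Prop) (f : T -> 'cV[R]_p) (x : T) : Prop :=
  X x /\ ~ (exists y, X y /\ mlt (f y) (f x)).

Variables (k m n : nat).
Variables (Ac Ad : 'M[R]_(m, n)) (bc bd : 'cV[R]_m) (G : 'M[R]_(k, n)) (l u : 'cV[R]_n).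

Definition qcqp_feasible (v : 'cV[R]_n * 'cV[R]_n * R) : Prop :=
  let: (xp, xm, r) := v in
  mle 0 xp /\ mle 0 xm /\ 0 <= r /\ r <= 1 /\
  mle (Ac *m xp - Ac *m xm + r *: (Ad *m xp) + r *: (Ad *m xm) + r *: bd - bc) 0 /\
  mle l (xp - xm) /\ mle (xp - xm) u.

Definition qcqp_obj (v : 'cV[R]_n * 'cV[R]_n * R) : 'cV[R]_(k + 1) :=
  let: (xp, xm, r) := v in col_mx (G *m (xp - xm)) (- r)%:M.

(* SDP relaxation: Z of size (2n+2), blocks of sizes 1, n, n, 1 *)
Definition sdpN := (n + n).+2.
Definition ix0 : 'I_sdpN := ord0.
Definition ixp (i : 'I_n) : 'I_sdpN := inord (1 + i).
Definition ixm (i : 'I_n) : 'I_sdpN := inord (1 + n + i).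
Definition ixr : 'I_sdpN := ord_max.

Definition zp (Z : 'M[R]_sdpN) : 'cV[R]_n := \col_i Z ix0 (ixp i).
Definition zm (Z : 'M[R]_sdpN) : 'cV[R]_n := \col_i Z ix0 (ixm i).
Definition rho (Z : 'M[R]_sdpN) : R := Z ix0 ixr.
Definition wp (Z : 'M[R]_sdpN) : 'cV[R]_n := \col_i Z (ixp i) ixr.
Definition wm (Z : 'M[R]_sdpN) : 'cV[R]_n := \col_i Z (ixm i) ixr.
Definition sigma (Z : 'M[R]_sdpN) : R := Z ixr ixr.

Definition sdp_feasible (Z : 'M[R]_sdpN) : Prop :=
  psd Z /\ Z ix0 ix0 = 1 /\
  mle (Ac *m zp Z - Ac *m zm Z + Ad *m (wp Z + wm Z) + rho Z *: bd - bc) 0 /\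
  mle l (zp Z - zm Z) /\ mle (zp Z - zm Z) u /\
  mle 0 (zp Z) /\ mle 0 (zm Z) /\ 0 <= rho Z /\ mle 0 (wp Z) /\ mle 0 (wm Z) /\
  sigma Z <= 1.

Definition sdp_obj (Z : 'M[R]_sdpN) : 'cV[R]_(k + 1) :=
  col_mx (G *m (zp Z - zm Z)) (- rho Z)%:M.

End Defs.

From HB Require Import structures.
From mathcomp Require Import all_boot all_order all_algebra.
From mathcomp Require Import zify lra.
Import Order.TTheory GRing.Theory Num.Theory.
Set Implicit Arguments. Unset Strict Implicit. Unset Printing Implicit Defensive.
Local Open Scope ring_scope.

(* Every QCQP-feasible point (x_+, x_-, r) lifts to the rank-one matrix v v^T
   with v = (1, x_+, x_-, r); this matrix is SDP-feasible and has the same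
   objective value.  Hence a QCQP point strictly dominating (z_+, z_-, 0) would
   lift to an SDP point strictly dominating Z.  Feasibility of (z_+, z_-, 0)
   itself holds because, for rho = 0, the SDP linear constraint differs from the
   QCQP one only by the nonnegative term A_delta (w_+ + w_-). *)

Lemma psd_outer (R : realFieldType) (N : nat) (v : 'cV[R]_N) : psd (v *m v^T).
Proof.
split; first by rewrite trmx_mul trmxK.
move=> x; have -> : x^T *m (v *m v^T) *m x = (x^T *m v) *m (x^T *m v)^T.
  by rewrite trmx_mul trmxK !mulmxA.
by rewrite mxE big_ord1 [(_^T) _ _]mxE sqr_ge0.
Qed.

Lemma weakly_efficient_transfer (R : realFieldType) (T T' : Type) (p : nat)
    (X : T -> Prop) (f : T -> 'cV[R]_p) (X' : T' -> Prop) (f' : T' -> 'cV[R]_p)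
    (x : T) (x' : T') :
  (forall y, X y -> exists2 y', X' y' & f' y' = f y) ->
  X x -> f x = f' x' -> weakly_efficient X' f' x' -> weakly_efficient X f x.
Proof.
move=> lift Xx fx [_ noDom]; split=> // -[y [Xy lt_y]].
have [y' X'y' fy'] := lift y Xy.
by apply: noDom; exists y'; rewrite fy' -fx.
Qed.

Section RankOneLift.
Variables (R : realFieldType) (n : nat).

(* Out-of-range indices read as 0; they never occur below. *)
Definition coord_at (x : 'cV[R]_n) (j : nat) : R :=
  if @insub _ (fun q => (q < n)%N) 'I_n j is Some i then x i ord0 else 0.

Lemma coord_atE (x : 'cV[R]_n) (i : 'I_n) : coord_at x i = x i ord0.
Proof. by rewrite /coord_at valK. Qed.

Definition lift_coord (xp xm : 'cV[R]_n) (r : R) (j : nat) : R :=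
  if j == 0%N then 1
  else if (j <= n)%N then coord_at xp j.-1
  else if (j <= n + n)%N then coord_at xm (j.-1 - n)
  else r.

Definition lift_mx (xp xm : 'cV[R]_n) (r : R) : 'M[R]_(sdpN n) :=
  let v : 'cV[R]_(sdpN n) := \col_j lift_coord xp xm r j in v *m v^T.

Variables (xp xm : 'cV[R]_n) (r : R).

Lemma lift_mxE i j : lift_mx xp xm r i j = lift_coord xp xm r i * lift_coord xp xm r j.
Proof. by rewrite mxE big_ord1 !mxE. Qed.

Lemma lift_coord0 : lift_coord xp xm r (ix0 n) = 1.
Proof. by []. Qed.

Lemma lift_coordp i : lift_coord xp xm r (ixp i) = xp i ord0.
Proof.
have lt_i := ltn_ord i.
rewrite /lift_coord /ixp inordK /sdpN; last by lia.
have -> : (1 + i <= n)%N by lia.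
by rewrite -coord_atE; congr coord_at; lia.
Qed.

Lemma lift_coordm i : lift_coord xp xm r (ixm i) = xm i ord0.
Proof.
have lt_i := ltn_ord i.
rewrite /lift_coord /ixm inordK /sdpN; last by lia.
have -> : (1 + n + i <= n)%N = false by lia.
have -> : (1 + n + i <= n + n)%N by lia.
by rewrite -coord_atE; congr coord_at; lia.
Qed.

Lemma lift_coordr : lift_coord xp xm r (ixr n) = r.
Proof.
rewrite /lift_coord /=.
have -> : ((n + n).+1 <= n)%N = false by lia.
by have -> : ((n + n).+1 <= n + n)%N = false by lia.
Qed.

Lemma zp_lift : zp (lift_mx xp xm r) = xp.
Proof. by apply/matrixP => i j; rewrite mxE lift_mxE lift_coord0 lift_coordp mul1r (ord1 j). Qed.

Lemma zm_lift : zm (lift_mx xp xm r) = xm.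
Proof. by apply/matrixP => i j; rewrite mxE lift_mxE lift_coord0 lift_coordm mul1r (ord1 j). Qed.

Lemma rho_lift : rho (lift_mx xp xm r) = r.
Proof. by rewrite /rho lift_mxE lift_coord0 lift_coordr mul1r. Qed.

Lemma wp_lift : wp (lift_mx xp xm r) = r *: xp.
Proof. by apply/matrixP => i j; rewrite mxE [RHS]mxE lift_mxE lift_coordp lift_coordr mulrC (ord1 j). Qed.

Lemma wm_lift : wm (lift_mx xp xm r) = r *: xm.
Proof. by apply/matrixP => i j; rewrite mxE [RHS]mxE lift_mxE lift_coordm lift_coordr mulrC (ord1 j). Qed.

Lemma sigma_lift : sigma (lift_mx xp xm r) = r * r.
Proof. by rewrite /sigma lift_mxE lift_coordr. Qed.

End RankOneLift.

Section Relaxation.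
Variables (R : realFieldType) (k m n : nat).
Variables (Ac Ad : 'M[R]_(m, n)) (bc bd : 'cV[R]_m) (G : 'M[R]_(k, n)) (l u : 'cV[R]_n).

Lemma sdp_obj_lift xp xm r : sdp_obj G (lift_mx xp xm r) = qcqp_obj G (xp, xm, r).
Proof. by rewrite /sdp_obj zp_lift zm_lift rho_lift. Qed.

Lemma sdp_feasible_lift xp xm r :
  qcqp_feasible Ac Ad bc bd l u (xp, xm, r) ->
  sdp_feasible Ac Ad bc bd l u (lift_mx xp xm r).
Proof.
move=> [xp_ge0 [xm_ge0 [r_ge0 [r_le1 [lin [lo hi]]]]]].
rewrite /sdp_feasible zp_lift zm_lift rho_lift wp_lift wm_lift sigma_lift.
split; first exact: psd_outer.
split; first by rewrite lift_mxE lift_coord0 mulr1.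
split; first by rewrite mulmxDr -!scalemxAr addrA.
do 5 split=> //.
split; first by move=> i j; rewrite !mxE mulr_ge0 //; have := xp_ge0 i j; rewrite mxE.
split; first by move=> i j; rewrite !mxE mulr_ge0 //; have := xm_ge0 i j; rewrite mxE.
exact: mulr_ile1.
Qed.

Lemma qcqp_feasible_rho0 (Z : 'M[R]_(sdpN n)) :
  mle 0 Ad -> sdp_feasible Ac Ad bc bd l u Z -> rho Z = 0 ->
  qcqp_feasible Ac Ad bc bd l u (zp Z, zm Z, 0).
Proof.
move=> Ad_ge0 [_ [_ [lin [lo [hi [zp_ge0 [zm_ge0 [_ [wp_ge0 [wm_ge0 _]]]]]]]]]] rho0.
do 4 split=> //; split; last by [].
move=> i j; rewrite !scale0r !addr0; apply: le_trans (lin i j).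
have AdW_ge0 : 0 <= (Ad *m (wp Z + wm Z)) i j.
  rewrite mxE; apply: sumr_ge0 => q _; apply: mulr_ge0.
    by have := Ad_ge0 i q; rewrite mxE.
  by rewrite mxE; apply: addr_ge0; [have := wp_ge0 q j | have := wm_ge0 q j]; rewrite mxE.
by move: AdW_ge0; rewrite rho0 scale0r addr0 !mxE; lra.
Qed.

End Relaxation.

Theorem mainTheorem3 (R : realFieldType) (k m n : nat)
  (Ac Ad : 'M[R]_(m, n)) (bc bd : 'cV[R]_m) (G : 'M[R]_(k, n)) (l u : 'cV[R]_n)
  (hAd : mle 0 Ad) (hbd : mle 0 bd) (hlu : mle l u)
  (Z : 'M[R]_(sdpN n))
  (hZ : weakly_efficient (sdp_feasible Ac Ad bc bd l u) (sdp_obj G) Z)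
  (hrho : rho Z = 0) :
  qcqp_feasible Ac Ad bc bd l u (zp Z, zm Z, 0)
  /\ weakly_efficient (qcqp_feasible Ac Ad bc bd l u) (qcqp_obj G) (zp Z, zm Z, 0)
  /\ qcqp_obj G (zp Z, zm Z, 0) = sdp_obj G Z.
Proof.
have obj_eq : qcqp_obj G (zp Z, zm Z, 0) = sdp_obj G Z by rewrite /qcqp_obj /sdp_obj hrho.
have feas := qcqp_feasible_rho0 hAd hZ.1 hrho.
do 2 split=> //.
apply: weakly_efficient_transfer feas obj_eq hZ => -[[xp xm] r] feas_y.
by exists (lift_mx xp xm r); [apply: sdp_feasible_lift | apply: sdp_obj_lift].
Qed.
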